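(* Consider a mean-variance team stochastic game as described in the context, and let $\tilde{\boldsymbol{\mu}}$ and the sets $\mathcal{D}_1^{\tilde{\boldsymbol{\mu}}},\dots,\mathcal{D}_N^{\tilde{\boldsymbol{\mu}}}$ be the output of Algorithm Modified MV-MAPI (described in the context). Let $\mathcal{D}^{\tilde{\boldsymbol{\mu}}}=\{(\mu_i,\tilde{\boldsymbol{\mu}}_{-i}):i\in\mathcal{N},\ \mu_i\in\mathcal{D}_i^{\tilde{\boldsymbol{\mu}}}\}$ and $\widetilde{\mathcal{D}}=\mathcal{D}\setminus\mathcal{D}^{\tilde{\boldsymbol{\mu}}}$. Then: (1) $J(\tilde{\boldsymbol{\mu}})=J(\boldsymbol{\mu})$ for all $\boldsymbol{\mu}\in\mathcal{D}^{\tilde{\boldsymbol{\mu}}}$, and $\widetilde{\mathcal{D}}$ is a valid pruned joint policy space, i.e. $\widetilde{\mathcal{D}}$ contains a joint policy $\boldsymbol{\mu}^*$ with $J(\boldsymbol{\mu}^* )=\max_{\boldsymbol{\mu}\in\mathcal{U}}J(\boldsymbol{\mu})$. (2) $\tilde{\boldsymbol{\mu}}$ is a strict local Nash equilibrium in the mixed joint policy space induced by $\widetilde{\mathcal{D}}$: there exists $\bar\delta\in(0,1]$ such that for all $\delta\in(0,\bar\delta]$, every agent $i\in\mathcal{N}$ and every deterministic policy $\mu_i\neq\tilde\mu_i$ of agent $i$ with $(\mu_i,\tilde{\boldsymbol{\mu}}_{-i})\in\widetilde{\mathcal{D}}$, we have $J(\tilde{\boldsymbol{\mu}})>J((1-\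delta)\tilde\mu_i+\delta\mu_i,\tilde{\boldsymbol{\mu}}_{-i})$.
   Context: Game: finite agents $\mathcal{N}=\{1,\dots,N\}$, finite state space $\mathcal{S}$, finite action sets $\mathcal{A}_i$, $\mathcal{A}=\prod_i\mathcal{A}_i$, transition kernel $P(s'|s,\boldsymbol{a})$, common reward $r:\mathcal{S}\times\mathcal{A}\to\mathbb{R}$. Policies $\mu_i:\mathcal{S}\to\Delta(\mathcal{A}_i)$ (set $\mathcal{U}_i$; deterministic policies are maps $\mathcal{S}\to\mathcal{A}_i$); joint policies $\boldsymbol{\mu}\in\mathcal{U}=\prod_i\mathcal{U}_i$ with $\boldsymbol{\mu}(\boldsymbol{a}|s)=\prod_i\mu_i(a_i|s)$; $\mathcal{D}$ is the set of deterministic joint policies; $(\mu_i,\boldsymbol{\mu}_{-i})$ means agent $i$ uses $\mu_i$, others use $\boldsymbol{\mu}_{-i}$; $(1-\delta)\tilde\mu_i+\delta\mu_i$ is the policy $s\mapsto(1-\delta)\tilde\mu_i(\cdot|s)+\delta\mu_i(\cdot|s)$. Standing assumption: the chain $P^{\boldsymbol{\mu}}(s'|s)=\sum_{\boldsymbol{a}}\boldsymbol{\mu}(\boldsymbol{a}|s)P(s'|s,\boldsymbol{a})$ is ergodic for every $\boldsymbol{\mu}\in\mathcal{U}$, stationary distribution $\pi^{\boldsymbol{\mu}}$. $\eta(\boldsymbol{\mu})=\sum_s\pi^{\boldsymbol{\mu}}(s)\sum_{\boldsymbol{a}}\boldsymbol{\mu}(\boldsymbol{a}|s)r(s,\boldsymbol{a})$;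 $\zeta(\boldsymbol{\mu})=\sum_s\pi^{\boldsymbol{\mu}}(s)\sum_{\boldsymbol{a}}\boldsymbol{\mu}(\boldsymbol{a}|s)(r(s,\boldsymbol{a})-\eta(\boldsymbol{\mu}))^2$; for fixed $\beta\ge0$, $J(\boldsymbol{\mu})=\eta(\boldsymbol{\mu})-\beta\zeta(\boldsymbol{\mu})$. $f^{\boldsymbol{\mu}}(s,\boldsymbol{a})=r(s,\boldsymbol{a})-\beta(r(s,\boldsymbol{a})-\eta(\boldsymbol{\mu}))^2$, $f^{\boldsymbol{\mu}}(s)=\sum_{\boldsymbol{a}}\boldsymbol{\mu}(\boldsymbol{a}|s)f^{\boldsymbol{\mu}}(s,\boldsymbol{a})$; $V_f^{\boldsymbol{\mu}}$ solves $V(s)=f^{\boldsymbol{\mu}}(s)-J(\boldsymbol{\mu})+\sum_{s'}P^{\boldsymbol{\mu}}(s'|s)V(s')$ (unique up to an additive constant); $Q_f^{\boldsymbol{\mu}}(s,\boldsymbol{a})=f^{\boldsymbol{\mu}}(s,\boldsymbol{a})-J(\boldsymbol{\mu})+\sum_{s'}P(s'|s,\boldsymbol{a})V_f^{\boldsymbol{\mu}}(s')$, $A_f^{\boldsymbol{\mu}}=Q_f^{\boldsymbol{\mu}}-V_f^{\boldsymbol{\mu}}$. Algorithm MV-MAPI (from a deterministic initial joint policy $\boldsymbol{\mu}^{(0)}$): for $k=0,1,\dots$: set $\hat{\boldsymbol{\mu}}^{(k,0)}=\boldsymbol{\mu}^{(k)}$, draw a random permutation $i_1,\dots,i_N$;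 for $h=1,\dots,N$, for every $s$ set $\mu^{(k+1)}_{i_h}(s)$ to an action maximizing $\mathbb{E}_{\boldsymbol{a}_{-i_h}\sim\hat{\boldsymbol{\mu}}^{(k,h-1)}_{-i_h}(\cdot|s)}[A_f^{\hat{\boldsymbol{\mu}}^{(k,h-1)}}(s,a_{i_h},\boldsymbol{a}_{-i_h})]$ (keeping $\mu^{(k)}_{i_h}(s)$ if it attains the maximum) and set $\hat{\boldsymbol{\mu}}^{(k,h)}=(\mu^{(k+1)}_{i_1},\dots,\mu^{(k+1)}_{i_h},\mu^{(k)}_{i_{h+1}},\dots,\mu^{(k)}_{i_N})$; if $\mu^{(k+1)}_i=\mu^{(k)}_i$ for all $i$, return $\boldsymbol{\mu}^{(k)}$, else set $\boldsymbol{\mu}^{(k+1)}=\hat{\boldsymbol{\mu}}^{(k,N)}$. Algorithm Modified MV-MAPI: (Step 1) run MV-MAPI and obtain $\tilde{\boldsymbol{\mu}}$. For each $i=1,\dots,N$: let $\mathcal{D}_i^{\tilde{\boldsymbol{\mu}}}$ be the set of deterministic policies $\mu_i\neq\tilde\mu_i$ of agent $i$ such that for every $s$, $\mu_i(s)\in\arg\max_{a_i}\mathbb{E}_{\boldsymbol{a}_{-i}\sim\tilde{\boldsymbol{\mu}}_{-i}(\cdot|s)}[A_f^{\tilde{\boldsymbol{\mu}}}(s,a_i,\boldsymbol{a}_{-i})]$; if some $\mu_i\in\mathcal{D}_i^{\tilde{\boldsymbol{\mu}}}$ satisfies $\eta(\mu_i,\tilde{\boldsymbol{\mu}}_{-i})\neq\eta(\tilde{\boldsymbol{\mu}})$,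 go back to Step 1 running MV-MAPI from the initial joint policy $(\mu_i,\tilde{\boldsymbol{\mu}}_{-i})$. When the loop over $i$ completes without restarting, output $\tilde{\boldsymbol{\mu}}$ and $\mathcal{D}_1^{\tilde{\boldsymbol{\mu}}},\dots,\mathcal{D}_N^{\tilde{\boldsymbol{\mu}}}$. *)

From HB Require Import structures.
From mathcomp Require Import all_boot all_order all_algebra all_fingroup.
From mathcomp Require Import reals.
From Stdlib Require Import ClassicalEpsilon.

Unset Implicit Arguments.
Unset Strict Implicit.
Unset Printing Implicit Defensive.
Import Order.TTheory GRing.Theory Num.Theory.
Local Open Scope ring_scope.

Section MVGame.
Variables (R : realType) (N : nat) (A : 'I_N -> finType) (S : finType).

Definition jact := {dffun forall i : 'I_N, A i}.

Variables (P : S -> jact -> S -> R) (r : S -> jact -> R) (beta : R).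

(* (stochastic) joint policies: mu i s a = mu_i(a|s) *)
Definition jpol := forall i : 'I_N, S -> A i -> R.
Definition is_policy (mu : jpol) : Prop :=
  forall i s, (forall a, 0 <= mu i s a) /\ \sum_(a : A i) mu i s a = 1.

Definition dpol := forall i : 'I_N, S -> A i.
Definition detp (d : dpol) : jpol := fun i s a => (a == d i s)%:R.

Definition jprob (mu : jpol) (s : S) (a : jact) : R := \prod_(i < N) mu i s (a i).

Definition upd (mu : jpol) (i : 'I_N) (m : S -> A i -> R) : jpol :=
  fun j => match i =P j with
           | ReflectT e => eq_rect i (fun k => S -> A k -> R) m j e
           | ReflectF _ => mu j end.
Definition dupd (d : dpol) (i : 'I_N) (m : S -> A i) : dpol :=
  fun j => match i =P j with
           | ReflectT e => eq_rect i (fun k => S -> A k) m j e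
           | ReflectF _ => d j end.

Definition mixpol (dt : dpol) (i : 'I_N) (di : S -> A i) (delta : R) : jpol :=
  upd (detp dt) i (fun s a => (1 - delta) * (a == dt i s)%:R + delta * (a == di s)%:R).

Definition PT (mu : jpol) (s s' : S) : R := \sum_(a : jact) jprob mu s a * P s a s'.
Fixpoint Pn (mu : jpol) (t : nat) (s s' : S) : R :=
  match t with
  | 0 => (s == s')%:R
  | t'.+1 => \sum_(u : S) Pn mu t' s u * PT mu u s'
  end.
(* ergodic finite chain: irreducible and aperiodic, i.e. some power of the
   transition matrix is entrywise positive *)
Definition ergodic (mu : jpol) : Prop := exists t, forall s s', 0 < Pn mu t s s'.

Definition is_stationary (mu : jpol) (pi : S -> R) : Prop :=
  (forall s, 0 <= pi s) /\ \sum_(s : S) pi s = 1 /\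
  (forall s', \sum_(s : S) pi s * PT mu s s' = pi s').
(* the stationary distribution (unique under ergodicity) *)
Definition stat (mu : jpol) : S -> R :=
  epsilon (inhabits (fun _ => 0)) (is_stationary mu).

Definition eta (mu : jpol) : R :=
  \sum_(s : S) stat mu s * \sum_(a : jact) jprob mu s a * r s a.
Definition zeta (mu : jpol) : R :=
  \sum_(s : S) stat mu s * \sum_(a : jact) jprob mu s a * (r s a - eta mu) ^+ 2.
Definition J (mu : jpol) : R := eta mu - beta * zeta mu.

Definition fsa (mu : jpol) (s : S) (a : jact) : R := r s a - beta * (r s a - eta mu) ^+ 2.
Definition fs (mu : jpol) (s : S) : R := \sum_(a : jact) jprob mu s a * fsa mu s a.

Definition poisson (mu : jpol) (V : S -> R) : Prop :=
  forall s, V s = fs mu s - J mu + \sum_(s' : S) PT mu s s' * V s'.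
(* a solution of the Poisson equation (unique up to an additive constant) *)
Definition Vf (mu : jpol) : S -> R := epsilon (inhabits (fun _ => 0)) (poisson mu).
Definition Qf (mu : jpol) (s : S) (a : jact) : R :=
  fsa mu s a - J mu + \sum_(s' : S) P s a s' * Vf mu s'.
Definition Af (mu : jpol) (s : S) (a : jact) : R := Qf mu s a - Vf mu s.

Definition EA (mu : jpol) (i : 'I_N) (s : S) (ai : A i) : R :=
  \sum_(a : jact | a i == ai) (\prod_(j < N | j != i) mu j s (a j)) * Af mu s a.

Definition is_argmax (mu : jpol) (i : 'I_N) (s : S) (ai : A i) : Prop :=
  forall b : A i, EA mu i s b <= EA mu i s ai.

(* one sweep of MV-MAPI from d with order sigma 0, ..., sigma (N-1), producing d' *)
Definition hat (d d' : dpol) (sigma : {perm 'I_N}) (h : nat) : dpol :=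
  fun i => if [exists k : 'I_N, (k < h)%N && (sigma k == i)] then d' i else d i.
Definition sweep (d : dpol) (sigma : {perm 'I_N}) (d' : dpol) : Prop :=
  forall h : 'I_N, forall s : S,
    is_argmax (detp (hat d d' sigma h)) (sigma h) s (d' (sigma h) s) /\
    (is_argmax (detp (hat d d' sigma h)) (sigma h) s (d (sigma h) s) ->
       d' (sigma h) s = d (sigma h) s).

(* MVret d0 dt : some run of MV-MAPI from d0 returns dt *)
Inductive MVret : dpol -> dpol -> Prop :=
  | MVret_stop (d : dpol) (sigma : {perm 'I_N}) :
      sweep d sigma d -> MVret d d
  | MVret_step (d d' dt : dpol) (sigma : {perm 'I_N}) :
      sweep d sigma d' -> d' <> d -> MVret d' dt -> MVret d dt.

Definition Dset (dt : dpol) (i : 'I_N) (di : S -> A i) : Prop :=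
  di <> dt i /\ forall s, is_argmax (detp dt) i s (di s).

(* ModOut d0 dt : some run of Modified MV-MAPI from d0 outputs dt
   (together with the sets Dset dt i) *)
Inductive ModOut : dpol -> dpol -> Prop :=
  | ModOut_out (d0 dt : dpol) :
      MVret d0 dt ->
      (forall i (di : S -> A i), Dset dt i di -> eta (detp (dupd dt i di)) = eta (detp dt)) ->
      ModOut d0 dt
  | ModOut_restart (d0 d1 dt : dpol) (i : 'I_N) (di : S -> A i) :
      MVret d0 d1 ->
      (forall (j : 'I_N) (dj : S -> A j), (j < i)%N -> Dset d1 j dj ->
          eta (detp (dupd d1 j dj)) = eta (detp d1)) ->
      Dset d1 i di -> eta (detp (dupd d1 i di)) <> eta (detp d1) ->
      ModOut (dupd d1 i di) dt ->
      ModOut d0 dt.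

Definition Dmu (dt : dpol) (d : dpol) : Prop :=
  exists i (di : S -> A i), Dset dt i di /\ d = dupd dt i di.

End MVGame.

Arguments is_policy {R N A S}.
Arguments detp {R N A S}.
Arguments jprob {R N A S}.
Arguments upd {R N A S}.
Arguments dupd {N A S}.
Arguments mixpol {R N A S}.
Arguments PT {R N A S}.
Arguments Pn {R N A S}.
Arguments ergodic {R N A S}.
Arguments is_stationary {R N A S}.
Arguments stat {R N A S}.
Arguments eta {R N A S}.
Arguments zeta {R N A S}.
Arguments J {R N A S}.
Arguments fsa {R N A S}.
Arguments fs {R N A S}.
Arguments poisson {R N A S}.
Arguments Vf {R N A S}.
Arguments Qf {R N A S}.
Arguments Af {R N A S}.
Arguments EA {R N A S}.
Arguments is_argmax {R N A S}.
Arguments hat {N A S}.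
Arguments sweep {R N A S}.
Arguments MVret {R N A S}.
Arguments Dset {R N A S}.
Arguments ModOut {R N A S}.
Arguments Dmu {R N A S}.

From Pilot Require Import Defs.
From HB Require Import structures.
From mathcomp Require Import all_boot all_order all_algebra all_fingroup.
From mathcomp Require Import reals ring lra.
From Stdlib Require Import ClassicalEpsilon FunctionalExtensionality Classical.

(* Ergodicity makes the Poisson equation of every policy solvable, which gives
   the performance-difference identity
     J(mu') - J(mu) = E_{pi^mu'}[A_f^mu] + beta (eta(mu') - eta(mu))^2.
   At the output mu~ every agent plays a maximiser of E[A_f^mu~], whose value
   at mu~ is 0, and deviations in D_i keep eta: for mu in D^mu~ both terms
   vanish.  Greedy improvement on A_f^mu dominates every J(mu) by J of a
   deterministic policy; a maximiser over D lying in D^mu~ can be replaced by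
   mu~.  A deviation outside D^mu~ has a strictly negative expected advantage
   at some state, which the stationary law of the delta-mixture charges
   uniformly in delta: the advantage term is -Theta(delta), while eta, by the
   same identity at beta = 0, moves by O(delta), so the quadratic term is
   O(delta^2). *)

Set Implicit Arguments.
Unset Strict Implicit.
Unset Printing Implicit Defensive.
Import Order.TTheory GRing.Theory Num.Theory.
Local Open Scope ring_scope.

Lemma sum_dffun_prod (R : comNzRingType) (I : finType) (T_ : I -> finType)
    (F_ : forall i : I, {ffun T_ i -> R}) :
  \sum_(a : {dffun forall i, T_ i}) \prod_i F_ i (a i) = \prod_i \sum_(b : T_ i) F_ i b.
Proof.
under [RHS]eq_bigr do rewrite (big_tag (fun i b => F_ i b)).
rewrite bigA_distr_big_dep -(big_fprod _ _ (fun i => F_ i)) /=.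
rewrite (reindex (@dffun_of_fprod I T_)); last exact/onW_bij/dffun_of_fprod_bij.
by apply: eq_bigr => t _; apply: eq_bigr => i _; rewrite ffunE.
Qed.

Lemma exists_uniform_threshold (R : realDomainType) (T : finType) (Q : T -> R -> Prop) :
  (forall x e e', Q x e -> 0 < e' <= e -> Q x e') ->
  (forall x, exists2 e, 0 < e & Q x e) ->
  exists2 e, 0 < e <= 1 & forall x, Q x e.
Proof.
move=> Qmono Qex.
suff [e e01 Qe] : exists2 e, 0 < e <= 1 & forall x, x \in enum T -> Q x e.
  by exists e => // x; apply: Qe; rewrite mem_enum.
elim: (enum T) => [|y l [e /andP[e0 e1] Qe]]; first by exists 1; [rewrite ltr01 lexx | ].
have [ey ey0 Qy] := Qex y.
have emin0 : 0 < Num.min e ey by rewrite lt_min e0 ey0.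
exists (Num.min e ey) => [|x]; first by rewrite emin0 ge_min e1.
rewrite inE => /orP[/eqP->|xl].
  by apply: Qmono Qy _; rewrite emin0 ge_min lexx orbT.
by apply: Qmono (Qe x xl) _; rewrite emin0 ge_min lexx.
Qed.

Lemma sum_enum_val (V : nmodType) (S : finType) (G : S -> V) :
  \sum_s G s = \sum_(k < #|S|) G (enum_val k).
Proof.
by rewrite (reindex (@enum_val S (pred_of_argType S))) //; exact/onW_bij/enum_val_bij.
Qed.

Lemma sum_delta_l (V : pzSemiRingType) (S : finType) (x : S) (F : S -> V) :
  \sum_s (x == s)%:R * F s = F x.
Proof.
rewrite (bigD1 x) //= eqxx mul1r big1 ?addr0 // => s /negbTE.
by rewrite eq_sym => ->; rewrite mul0r.
Qed.

Lemma sum_delta_r (V : pzSemiRingType) (S : finType) (x : S) (F : S -> V) :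
  \sum_s F s * (s == x)%:R = F x.
Proof.
rewrite (bigD1 x) //= eqxx mulr1 big1 ?addr0 // => s /negbTE ->.
by rewrite mulr0.
Qed.

Lemma sum_indicator (V : pzSemiRingType) (S : finType) (x : S) :
  \sum_s (s == x)%:R = 1 :> V.
Proof. by rewrite -[RHS](sum_delta_r x (fun=> 1)); under [RHS]eq_bigr do rewrite mul1r. Qed.

Section FinSquareSystem.
Variables (F : fieldType) (S : finType) (M : S -> S -> F).

Let fmx : 'M[F]_#|S| := \matrix_(k, j) M (enum_val k) (enum_val j).
Let cv (x : S -> F) : 'cV[F]_#|S| := \col_k x (enum_val k).
Let rv (y : S -> F) : 'rV[F]_#|S| := \row_k y (enum_val k).

Let rv_mul_fmx y : rv y *m fmx = rv (fun s' => \sum_s y s * M s s').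
Proof.
apply/rowP => k; rewrite !mxE [RHS]sum_enum_val.
by apply: eq_bigr => j _; rewrite !mxE.
Qed.

Let fmx_mul_cv x : fmx *m cv x = cv (fun s => \sum_s' M s s' * x s').
Proof.
apply/colP => k; rewrite !mxE [RHS]sum_enum_val.
by apply: eq_bigr => j _; rewrite !mxE.
Qed.

Let cvE x s : cv x (enum_rank s) 0 = x s.
Proof. by rewrite mxE enum_rankK. Qed.

Let rvE y s : rv y 0 (enum_rank s) = y s.
Proof. by rewrite mxE enum_rankK. Qed.

Let rv_enum_rank (c : 'rV[F]_#|S|) : rv (fun s => c 0 (enum_rank s)) = c.
Proof. by apply/rowP => k; rewrite mxE enum_valK. Qed.

Let cv_enum_rank (c : 'cV[F]_#|S|) : cv (fun s => c (enum_rank s) 0) = c.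
Proof. by apply/colP => k; rewrite mxE enum_valK. Qed.

Lemma left_kernel_of_right_kernel (x : S -> F) (s0 : S) :
  x s0 != 0 -> (forall s, \sum_s' M s s' * x s' = 0) ->
  exists2 y : S -> F, (exists s, y s != 0) & forall s', \sum_s y s * M s s' = 0.
Proof.
move=> xs0 Mx.
have fmx_nonunit : fmx \notin unitmx.
  apply: contraNN xs0 => fmxU; rewrite -cvE -(mulKmx fmxU (cv x)) fmx_mul_cv.
  by rewrite (_ : cv _ = 0) ?mulmx0 ?mxE //; apply/colP => k; rewrite !mxE Mx.
have [k kerk] : exists k, row k (kermx fmx) != 0.
  apply/existsP; apply: contraR fmx_nonunit; rewrite negb_exists => /forallP ker0.
  rewrite -row_free_unit -kermx_eq0; apply/eqP/row_matrixP => k.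
  by rewrite row0; apply/eqP/negPn/ker0.
set u := row k (kermx fmx) in kerk.
have [j ukj] : exists j, u 0 j != 0.
  apply/existsP; apply: contraR kerk; rewrite negb_exists => /forallP u0.
  by apply/eqP/rowP => j; rewrite [RHS]mxE; apply/eqP/negPn/u0.
exists (fun s => u 0 (enum_rank s)); first by exists (enum_val j); rewrite enum_valK.
move=> s'; rewrite -[LHS](rvE (fun s' => \sum_s u 0 (enum_rank s) * M s s')).
by rewrite -rv_mul_fmx rv_enum_rank /u -row_mul mulmx_ker row0 mxE.
Qed.

Lemma solvable_of_injective :
  (forall x : S -> F, (forall s, \sum_s' M s s' * x s' = 0) -> forall s, x s = 0) ->
  forall g : S -> F, exists x : S -> F, forall s, \sum_s' M s s' * x s' = g s.
Proof.
move=> Minj g.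
have fmxU : fmx \in unitmx.
  rewrite -unitmx_tr -row_free_unit -kermx_eq0; apply/eqP/row_matrixP => k.
  set u := row k _; rewrite row0.
  have uT : u^T = cv (fun s => u 0 (enum_rank s)).
    by apply/colP => i; rewrite !mxE enum_valK.
  have Mu0 : fmx *m u^T = 0.
    by rewrite -[fmx]trmxK -trmx_mul /u -row_mul mulmx_ker row0 trmx0.
  have u0 := Minj (fun s => u 0 (enum_rank s)).
  apply/rowP => j; rewrite [RHS]mxE -[j]enum_valK; apply: u0 => s.
  rewrite -[LHS](cvE (fun s => \sum_s' M s s' * u 0 (enum_rank s'))).
  by rewrite -fmx_mul_cv -uT Mu0 mxE.
pose x s := (invmx fmx *m cv g) (enum_rank s) 0.
exists x => s; rewrite -[RHS](cvE g) -[LHS](cvE (fun s => \sum_s' M s s' * x s')).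
by rewrite -fmx_mul_cv cv_enum_rank mulKVmx.
Qed.

End FinSquareSystem.

Section StochasticKernel.
Variables (R : realType) (S : finType).

Fixpoint kpow (T : S -> S -> R) (t : nat) (s s' : S) : R :=
  match t with
  | 0 => (s == s')%:R
  | t'.+1 => \sum_u kpow T t' s u * T u s'
  end.

Variable T : S -> S -> R.
Hypothesis T_ge0 : forall s s', 0 <= T s s'.
Hypothesis T_sum1 : forall s, \sum_s' T s s' = 1.

Lemma kpow_ge0 t s s' : 0 <= kpow T t s s'.
Proof.
elim: t s' => [|t IH] s' /=; first exact: ler0n.
by apply: sumr_ge0 => u _; apply: mulr_ge0.
Qed.

Lemma kpow_sum1 t s : \sum_s' kpow T t s s' = 1.
Proof.
elim: t => [|t IH] /=.
  by under eq_bigr do rewrite -[_%:R]mulr1; rewrite sum_delta_l.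
by rewrite exchange_big /=; under eq_bigr do rewrite -mulr_sumr T_sum1 mulr1.
Qed.

Lemma invariant_kpow (pi : S -> R) t s' :
  (forall s', \sum_s pi s * T s s' = pi s') -> \sum_s pi s * kpow T t s s' = pi s'.
Proof.
move=> piT; elim: t s' => [|t IH] s' /=; first exact: sum_delta_r.
under eq_bigr do rewrite mulr_sumr.
rewrite exchange_big /= -[RHS]piT; apply: eq_bigr => u _.
by rewrite -IH mulr_suml; apply: eq_bigr => s _; rewrite mulrA.
Qed.

Lemma harmonic_kpow (x : S -> R) t s :
  (forall s, x s = \sum_s' T s s' * x s') -> x s = \sum_s' kpow T t s s' * x s'.
Proof.
move=> Tx; elim: t s => [|t IH] s /=; first by rewrite sum_delta_l.
under eq_bigr do rewrite mulr_suml.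
rewrite exchange_big /= IH; apply: eq_bigr => u _.
by rewrite Tx mulr_sumr; apply: eq_bigr => s' _; rewrite mulrA.
Qed.

(* Maximum principle: a harmonic function attains its maximum everywhere
   reachable from a maximiser, i.e. everywhere. *)
Lemma harmonic_const (x : S -> R) t :
  (forall s s', 0 < kpow T t s s') ->
  (forall s, x s = \sum_s' T s s' * x s') -> forall s s', x s = x s'.
Proof.
move=> Tt_gt0 Tx s.
have [m _ xm] := @arg_maxP _ _ S s xpredT x isT.
suff xE s' : x s' = x m by move=> s'; rewrite !xE.
have gap0 : \sum_s'' kpow T t m s'' * (x m - x s'') = 0.
  under eq_bigr do rewrite mulrBr.
  by rewrite sumrB -mulr_suml kpow_sum1 mul1r -harmonic_kpow // subrr.
have gap_ge0 s'' : true -> 0 <= kpow T t m s'' * (x m - x s'').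
  by move=> _; rewrite mulr_ge0 ?kpow_ge0 // subr_ge0; exact: xm.
have /eqP := psumr_eq0P gap_ge0 gap0 (i := s') isT.
by rewrite mulf_eq0 gt_eqF ?Tt_gt0 //= subr_eq0 => /eqP.
Qed.

Lemma subinvariant_invariant (w : S -> R) :
  (forall s', w s' <= \sum_s w s * T s s') -> forall s', \sum_s w s * T s s' = w s'.
Proof.
move=> wT s'; apply/eqP; rewrite -subr_eq0; apply/eqP.
have gap0 : \sum_s' (\sum_s w s * T s s' - w s') = 0.
  rewrite sumrB exchange_big /=.
  by under eq_bigr do rewrite -mulr_sumr T_sum1 mulr1; rewrite subrr.
by move/psumr_eq0P: gap0 => -> // s'' _; rewrite subr_ge0.
Qed.

(* A nonzero left null vector y of I - T exists because T 1 = 1;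
   normalising |y| yields the stationary distribution. *)
Lemma stationary_exists (s0 : S) : exists pi : S -> R,
  [/\ forall s, 0 <= pi s, \sum_s pi s = 1 & forall s', \sum_s pi s * T s s' = pi s'].
Proof.
pose M s s' := (s == s')%:R - T s s'.
have [|s|y [j yj] yM] := left_kernel_of_right_kernel (M := M) (x := fun=> 1) (s0 := s0).
- exact: oner_neq0.
- under eq_bigr do rewrite mulrBl.
  by rewrite sumrB sum_delta_l; under eq_bigr do rewrite mulr1; rewrite T_sum1 subrr.
have yT s' : \sum_s y s * T s s' = y s'.
  move: (yM s'); under eq_bigr do rewrite mulrBr.
  by rewrite sumrB sum_delta_r => /eqP; rewrite subr_eq0 => /eqP <-.
pose w s := `|y s|.
have wT : forall s', \sum_s w s * T s s' = w s'.
  apply: subinvariant_invariant => s'; rewrite /w -yT.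
  apply: le_trans (ler_norm_sum _ _ _) _.
  by apply: ler_sum => s _; rewrite normrM (ger0_norm (T_ge0 _ _)).
have w_gt0 : 0 < \sum_s w s.
  apply: (@lt_le_trans _ _ (w j)); first by rewrite normr_gt0.
  by rewrite (bigD1 j) //= lerDl; apply: sumr_ge0 => s _; apply: normr_ge0.
exists (fun s => w s / \sum_s w s); split.
- by move=> s; apply: divr_ge0; [apply: normr_ge0 | apply: ltW].
- by rewrite -mulr_suml mulfV // gt_eqF.
- by move=> s'; under eq_bigr do rewrite mulrAC; rewrite -mulr_suml wT.
Qed.

(* x |-> x - T x + (pi . x) 1 is injective by the maximum principle; since it
   preserves pi . x, solving it for g with pi . g = 0 solves V = g + T V. *)
Lemma poisson_solvable t (pi g : S -> R) :
  (forall s s', 0 < kpow T t s s') ->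
  \sum_s pi s = 1 -> (forall s', \sum_s pi s * T s s' = pi s') ->
  \sum_s pi s * g s = 0 ->
  exists V : S -> R, forall s, V s = g s + \sum_s' T s s' * V s'.
Proof.
move=> Tt_gt0 pi1 piT pig.
pose M s s' := (s == s')%:R - T s s' + pi s'.
have MxE x s : \sum_s' M s s' * x s' =
    x s - \sum_s' T s s' * x s' + \sum_s' pi s' * x s'.
  under eq_bigr do rewrite mulrDl mulrBl.
  by rewrite big_split sumrB sum_delta_l.
have pi_Mx x : \sum_s pi s * \sum_s' M s s' * x s' = \sum_s pi s * x s.
  under eq_bigr do rewrite MxE mulrDr mulrBr.
  rewrite big_split sumrB /= -mulr_suml pi1 mul1r.
  suff -> : \sum_s pi s * \sum_s' T s s' * x s' = \sum_s pi s * x s by rewrite subrr add0r.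
  under eq_bigr do rewrite mulr_sumr.
  rewrite exchange_big /=; apply: eq_bigr => s' _.
  by rewrite -[in RHS]piT mulr_suml; apply: eq_bigr => s _; rewrite mulrA.
have [|x Mx] := solvable_of_injective (M := M) _ g.
  move=> x Mx0.
  have pix0 : \sum_s pi s * x s = 0.
    by rewrite -pi_Mx big1 // => s _; rewrite Mx0 mulr0.
  have Tx s : x s = \sum_s' T s s' * x s'.
    by have /eqP := MxE x s; rewrite Mx0 pix0 addr0 eq_sym subr_eq0 => /eqP.
  move=> s; rewrite -pix0 -[LHS]mul1r -pi1 mulr_suml.
  by apply: eq_bigr => s' _; rewrite (harmonic_const Tt_gt0 Tx s s').
have pix0 : \sum_s pi s * x s = 0.
  by rewrite -pi_Mx -[RHS]pig; apply: eq_bigr => s _; rewrite Mx.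
by exists x => s; rewrite -Mx MxE pix0 addr0 subrK.
Qed.

End StochasticKernel.

Lemma kpow_ge_scale (R : realType) (S : finType) (T T' : S -> S -> R) (c : R) :
  (forall s s', 0 <= T s s') -> 0 <= c -> (forall s s', c * T s s' <= T' s s') ->
  forall t s s', c ^+ t * kpow T t s s' <= kpow T' t s s'.
Proof.
move=> T_ge0 c_ge0 cT t; elim: t => [|t IH] s s' /=; first by rewrite mul1r.
rewrite mulr_sumr; apply: ler_sum => u _.
rewrite exprSr mulrACA; apply: ler_pM => //.
- by rewrite mulr_ge0 ?exprn_ge0 ?kpow_ge0.
- exact: mulr_ge0.
Qed.

Lemma stationary_ge_scale (R : realType) (S : finType) (T T' : S -> S -> R)
    (pi' : S -> R) (c m : R) t (s1 : S) :
  (forall s s', 0 <= T s s') -> 0 <= c -> (forall s s', c * T s s' <= T' s s') ->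
  (forall s, 0 <= pi' s) -> \sum_s pi' s = 1 ->
  (forall s', \sum_s pi' s * T' s s' = pi' s') ->
  (forall s, m <= kpow T t s s1) -> c ^+ t * m <= pi' s1.
Proof.
move=> T_ge0 c_ge0 cT pi'_ge0 pi'1 pi'T' mT.
rewrite -(invariant_kpow t s1 pi'T') -[X in X <= _]mul1r -pi'1 mulr_suml.
apply: ler_sum => s _; apply: ler_wpM2l => //.
apply: le_trans (kpow_ge_scale T_ge0 c_ge0 cT t s s1).
by rewrite ler_wpM2l ?exprn_ge0.
Qed.

Section TeamGame.
Variables (R : realType) (N : nat) (A : 'I_N -> finType) (S : finType).
Variables (P : S -> jact N A -> S -> R) (r : S -> jact N A -> R).
Hypothesis P_ge0 : forall s a s', 0 <= P s a s'.
Hypothesis P_sum1 : forall s a, \sum_s' P s a s' = 1.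

Implicit Types (mu : jpol R N A S) (d : dpol N A S).

Lemma jprob_ge0 mu s a : is_policy mu -> 0 <= jprob mu s a.
Proof. by move=> mu_pol; apply: prodr_ge0 => i _; apply: (mu_pol i s).1. Qed.

Lemma jprob_sum1 mu s : is_policy mu -> \sum_a jprob mu s a = 1.
Proof.
move=> mu_pol.
transitivity (\sum_(a : jact N A) \prod_i [ffun b => mu i s b] (a i)).
  by apply: eq_bigr => a _; apply: eq_bigr => i _; rewrite ffunE.
rewrite sum_dffun_prod; apply: big1 => i _; rewrite -(mu_pol i s).2.
by apply: eq_bigr => b _; rewrite ffunE.
Qed.

Lemma PT_ge0 mu s s' : is_policy mu -> 0 <= PT P mu s s'.
Proof. by move=> mu_pol; apply: sumr_ge0 => a _; rewrite mulr_ge0 ?jprob_ge0. Qed.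

Lemma PT_sum1 mu s : is_policy mu -> \sum_s' PT P mu s s' = 1.
Proof.
move=> mu_pol; rewrite /PT exchange_big /=.
by under eq_bigr do rewrite -mulr_sumr P_sum1 mulr1; apply: jprob_sum1.
Qed.

Lemma Pn_kpow mu t s s' : Pn P mu t s s' = kpow (PT P mu) t s s'.
Proof. by elim: t s' => //= t IH s'; under eq_bigr do rewrite IH. Qed.

Lemma detp_policy d : is_policy (detp (R := R) d).
Proof. by move=> i s; split=> [a|]; [exact: ler0n | exact: sum_indicator]. Qed.

Lemma upd_eq mu i (m : S -> A i -> R) : upd mu i m i = m.
Proof. by rewrite /upd; case: (i =P i) => // e; rewrite (eq_irrelevance e (erefl i)). Qed.

Lemma upd_neq mu i j (m : S -> A i -> R) : i != j -> upd mu i m j = mu j.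
Proof. by rewrite /upd; case: (i =P j) => // ->; rewrite eqxx. Qed.

Lemma dupd_eq d i (m : S -> A i) : dupd d i m i = m.
Proof. by rewrite /dupd; case: (i =P i) => // e; rewrite (eq_irrelevance e (erefl i)). Qed.

Lemma dupd_neq d i j (m : S -> A i) : i != j -> dupd d i m j = d j.
Proof. by rewrite /dupd; case: (i =P j) => // ->; rewrite eqxx. Qed.

Lemma dupd_id d i : dupd d i (d i) = d.
Proof.
apply: functional_extensionality_dep => j.
by case: (eqVneq i j) => [<-|ij]; rewrite ?dupd_eq ?dupd_neq.
Qed.

Lemma jprob_upd mu i (m : S -> A i -> R) s a :
  jprob (upd mu i m) s a = m s (a i) * \prod_(j | j != i) mu j s (a j).
Proof.
rewrite /jprob (bigD1 i) //= upd_eq; congr (_ * _).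
by apply: eq_bigr => j ji; rewrite upd_neq // eq_sym.
Qed.

Lemma jprob_dupd d i (m : S -> A i) s a :
  jprob (detp (dupd d i m)) s a =
  (a i == m s)%:R * \prod_(j | j != i) detp (R := R) d j s (a j).
Proof.
rewrite /jprob (bigD1 i) //= {1}/detp dupd_eq; congr (_ * _).
by apply: eq_bigr => j ji; rewrite /detp dupd_neq // eq_sym.
Qed.

Lemma jprob_detp_at d i s a :
  jprob (detp d) s a = (a i == d i s)%:R * \prod_(j | j != i) detp (R := R) d j s (a j).
Proof. by rewrite /jprob (bigD1 i). Qed.

Lemma jprob_mixpol dt i (di : S -> A i) (dl : R) s a :
  jprob (mixpol dt i di dl) s a =
  (1 - dl) * jprob (detp dt) s a + dl * jprob (detp (dupd dt i di)) s a.
Proof.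
rewrite /mixpol jprob_upd jprob_dupd (jprob_detp_at _ i).
by rewrite mulrDl !mulrA.
Qed.

Lemma mixpol_policy dt i (di : S -> A i) (dl : R) : 0 <= dl <= 1 ->
  is_policy (mixpol dt i di dl).
Proof.
move=> /andP[dl_ge0 dl_le1] j s; rewrite /mixpol.
have [<-|ij] := eqVneq i j; last by rewrite upd_neq //; apply: detp_policy.
rewrite upd_eq; split=> [a|].
  by rewrite addr_ge0 // mulr_ge0 ?subr_ge0 ?ler0n.
by rewrite big_split /= -!mulr_sumr !sum_indicator !mulr1 subrK.
Qed.

Lemma sum_jprob_dupd d i (m : S -> A i) s (F : jact N A -> R) :
  \sum_a jprob (detp (dupd d i m)) s a * F a =
  \sum_(a : jact N A | a i == m s) (\prod_(j | j != i) detp (R := R) d j s (a j)) * F a.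
Proof.
rewrite [RHS]big_mkcond; apply: eq_bigr => a _; rewrite jprob_dupd.
by case: (a i == m s); rewrite ?mul1r ?mul0r.
Qed.

Definition dact d s : jact N A := [ffun i => d i s].

Lemma sum_jprob_detp d s (F : jact N A -> R) :
  \sum_a jprob (detp (R := R) d) s a * F a = F (dact d s).
Proof.
rewrite (bigD1 (dact d s)) //= big1 ?addr0.
  by rewrite /jprob big1 ?mul1r // => i _; rewrite /detp ffunE eqxx.
move=> a /eqP a_neq; suff -> : jprob (detp (R := R) d) s a = 0 by rewrite mul0r.
have [i ai] : exists i, a i != d i s.
  apply/existsP; apply: contra_notT a_neq; rewrite negb_exists => /forallP ad.
  by apply/ffunP => i; rewrite ffunE; apply/eqP/negPn/ad.
by rewrite /jprob (bigD1 i) //= /detp (negbTE ai) mul0r.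
Qed.

Variable s0 : S.

Lemma stat_spec mu : is_policy mu -> is_stationary P mu (stat P mu).
Proof.
move=> mu_pol; apply: epsilon_spec.
have [pi [pi_ge0 pi1 piT]] :=
  stationary_exists (fun s s' => PT_ge0 s s' mu_pol) (fun s => PT_sum1 s mu_pol) s0.
by exists pi.
Qed.

Definition Estat mu (F : S -> jact N A -> R) : R :=
  \sum_s stat P mu s * \sum_a jprob mu s a * F s a.

Lemma eq_Estat mu (F G : S -> jact N A -> R) :
  (forall s a, F s a = G s a) -> Estat mu F = Estat mu G.
Proof.
by move=> FG; apply: eq_bigr => s _; congr (_ * _); apply: eq_bigr => a _; rewrite FG.
Qed.

Lemma EstatDZ mu c (F G : S -> jact N A -> R) :
  Estat mu (fun s a => c * F s a + G s a) = c * Estat mu F + Estat mu G.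
Proof.
rewrite /Estat [X in _ = X + _]mulr_sumr -big_split /=; apply: eq_bigr => s _.
rewrite mulrCA -mulrDr; congr (_ * _); rewrite mulr_sumr -big_split /=.
by apply: eq_bigr => a _; rewrite mulrDr mulrCA.
Qed.

Lemma EstatC mu c : is_policy mu -> Estat mu (fun _ _ => c) = c.
Proof.
move=> mu_pol; rewrite /Estat; under eq_bigr do rewrite -mulr_suml jprob_sum1 // mul1r.
by rewrite -mulr_suml (stat_spec mu_pol).2.1 mul1r.
Qed.

Lemma sum_jprob_telescope mu s (F : jact N A -> R) (h : S -> R) : is_policy mu ->
  \sum_a jprob mu s a * (F a + \sum_s' P s a s' * h s' - h s) =
  \sum_a jprob mu s a * F a + \sum_s' PT P mu s s' * h s' - h s.
Proof.
move=> mu_pol; under eq_bigr do rewrite mulrBr mulrDr.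
rewrite sumrB big_split /= -mulr_suml jprob_sum1 // mul1r; congr (_ + _ - _).
under eq_bigr do rewrite mulr_sumr.
rewrite exchange_big /=; apply: eq_bigr => s' _.
by rewrite /PT mulr_suml; apply: eq_bigr => a _; rewrite mulrA.
Qed.

Lemma Estat_telescope mu (F : S -> jact N A -> R) (h : S -> R) : is_policy mu ->
  Estat mu (fun s a => F s a + \sum_s' P s a s' * h s' - h s) = Estat mu F.
Proof.
move=> mu_pol; rewrite /Estat; under eq_bigr do rewrite sum_jprob_telescope //.
under eq_bigr do rewrite mulrBr mulrDr.
rewrite sumrB big_split /=.
suff -> : \sum_s stat P mu s * \sum_s' PT P mu s s' * h s' = \sum_s stat P mu s * h s.
  by rewrite addrK.
under eq_bigr do rewrite mulr_sumr.
rewrite exchange_big /=; apply: eq_bigr => s' _.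
rewrite -(stat_spec mu_pol).2.2 mulr_suml.
by apply: eq_bigr => s _; rewrite mulrA.
Qed.

Lemma J_Estat beta mu : is_policy mu -> Estat mu (fsa P r beta mu) = J P r beta mu.
Proof.
move=> mu_pol; rewrite /J (@eq_Estat mu _
  (fun s a => 1 * r s a + ((- beta) * (r s a - Defs.eta P r mu) ^+ 2 + 0))).
  by rewrite !EstatDZ EstatC // mul1r addr0 mulNr.
by move=> s a; rewrite /fsa mul1r addr0 mulNr.
Qed.

Hypothesis erg : forall mu : jpol R N A S, is_policy mu -> ergodic P mu.

Lemma Vf_spec beta mu : is_policy mu -> poisson P r beta mu (Vf P r beta mu).
Proof.
move=> mu_pol; apply: epsilon_spec.
have [t Pt_gt0] := erg mu_pol.
have [_ [stat1 statT]] := stat_spec mu_pol.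
have avg0 : \sum_s stat P mu s * (fs P r beta mu s - J P r beta mu) = 0.
  under eq_bigr do rewrite mulrBr.
  by rewrite sumrB -mulr_suml stat1 mul1r -(J_Estat beta mu_pol) subrr.
have [|V poissonV] := poisson_solvable (fun s s' => PT_ge0 s s' mu_pol)
  (fun s => PT_sum1 s mu_pol) (t := t) _ stat1 statT avg0.
  by move=> s s'; rewrite -Pn_kpow.
by exists V.
Qed.

Lemma sum_jprob_Af beta mu s : is_policy mu ->
  \sum_a jprob mu s a * Af P r beta mu s a = 0.
Proof.
move=> mu_pol; rewrite /Af /Qf.
rewrite (sum_jprob_telescope s (fun a => fsa P r beta mu s a - J P r beta mu)) //.
under eq_bigr do rewrite mulrBr.
rewrite sumrB -mulr_suml jprob_sum1 // mul1r.
by rewrite -/(fs P r beta mu s) -(Vf_spec beta mu_pol s) subrr.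
Qed.

(* Performance difference formula; the quadratic term comes from re-centring
   the variance of mu' at eta mu instead of eta mu'. *)
Lemma J_diff beta mu mu' : is_policy mu -> is_policy mu' ->
  J P r beta mu' - J P r beta mu =
  Estat mu' (Af P r beta mu) + beta * (Defs.eta P r mu' - Defs.eta P r mu) ^+ 2.
Proof.
move=> mu_pol mu'_pol.
have -> : Estat mu' (Af P r beta mu) =
    Estat mu' (fun s a => fsa P r beta mu s a - J P r beta mu).
  exact: (Estat_telescope _ (Vf P r beta mu) mu'_pol).
set e := Defs.eta P r mu; set e' := Defs.eta P r mu'.
rewrite (@eq_Estat mu' _ (fun s a => (1 - 2 * beta * (e' - e)) * r s a +
   ((- beta) * (r s a - e') ^+ 2 + (- beta * (e ^+ 2 - e' ^+ 2) - J P r beta mu)))).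
  rewrite 2!EstatDZ EstatC // /J -/e -/e'.
  have -> : Estat mu' r = e' by [].
  have -> : Estat mu' (fun s a => (r s a - e') ^+ 2) = zeta P r mu' by [].
  ring.
by move=> s a; rewrite /fsa -/e; ring.
Qed.

Lemma eta_diff mu mu' : is_policy mu -> is_policy mu' ->
  Defs.eta P r mu' - Defs.eta P r mu = Estat mu' (Af P r 0 mu).
Proof.
by move=> mu_pol mu'_pol; have := J_diff 0 mu_pol mu'_pol; rewrite /J !mul0r !subr0 addr0.
Qed.

Lemma EA_dupd beta d i (m : S -> A i) s :
  EA P r beta (detp d) i s (m s) =
  \sum_a jprob (detp (dupd d i m)) s a * Af P r beta (detp d) s a.
Proof. by rewrite sum_jprob_dupd. Qed.

Lemma EA_self beta d i s : EA P r beta (detp d) i s (d i s) = 0.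
Proof. by rewrite (EA_dupd _ _ (d i)) dupd_id sum_jprob_Af //; apply: detp_policy. Qed.

Lemma Estat_dupd_Af beta d i (m : S -> A i) :
  Estat (detp (dupd d i m)) (Af P r beta (detp d)) =
  \sum_s stat P (detp (dupd d i m)) s * EA P r beta (detp d) i s (m s).
Proof. by apply: eq_bigr => s _; rewrite EA_dupd. Qed.

Lemma Estat_mixpol_Af beta dt i (di : S -> A i) (dl : R) :
  Estat (mixpol dt i di dl) (Af P r beta (detp dt)) =
  dl * \sum_s stat P (mixpol dt i di dl) s * EA P r beta (detp dt) i s (di s).
Proof.
rewrite /Estat mulr_sumr; apply: eq_bigr => s _; rewrite mulrCA; congr (_ * _).
under eq_bigr do rewrite jprob_mixpol mulrDl -!mulrA.
by rewrite big_split /= -!mulr_sumr sum_jprob_Af ?mulr0 ?add0r ?EA_dupd //; apply: detp_policy.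
Qed.

Lemma PT_mixpol_ge dt i (di : S -> A i) (dl : R) s s' : 0 <= dl <= 1 ->
  (1 - dl) * PT P (detp dt) s s' <= PT P (mixpol dt i di dl) s s'.
Proof.
move=> /andP[dl_ge0 dl_le1]; rewrite /PT mulr_sumr; apply: ler_sum => a _.
rewrite jprob_mixpol [in X in _ <= X]mulrDl !mulrA lerDl.
by rewrite !mulr_ge0 // jprob_ge0 //; apply: detp_policy.
Qed.

(* The mixture keeps weight 1 - dl >= 1/2 on the ergodic chain of dt. *)
Lemma stat_mixpol_ge dt i (di : S -> A i) s1 :
  exists2 p : R, 0 < p &
    forall dl, 0 <= dl <= 2^-1 -> p <= stat P (mixpol dt i di dl) s1.
Proof.
have [t Pt_gt0] := erg (detp_policy dt).
pose Tt s := kpow (PT P (detp dt)) t s s1.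
have [smin _ smin_min] := @arg_minP _ _ S s1 xpredT Tt isT.
exists ((2^-1) ^+ t * Tt smin).
  by rewrite mulr_gt0 ?exprn_gt0 ?invr_gt0 ?ltr0n // /Tt -Pn_kpow.
move=> dl /andP[dl_ge0 dl_half].
have dl01 : 0 <= dl <= 1 by rewrite dl_ge0 (le_trans dl_half) // invf_le1 ?ler1n.
have [stat_ge0 [stat1 statT]] := stat_spec (mixpol_policy dt di dl01).
apply: le_trans (stationary_ge_scale (fun s s' => PT_ge0 s s' (detp_policy dt)) _
  (fun s s' => @PT_mixpol_ge dt i di dl s s' dl01) stat_ge0 stat1 statT
  (fun s => smin_min s isT)).
  rewrite ler_wpM2r ?(kpow_ge0 (fun s s' => PT_ge0 s s' (detp_policy dt))) //.
  by apply: lerXn2r; rewrite ?nnegrE; lra.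
by rewrite subr_ge0; case/andP: dl01.
Qed.

Section ModifiedMVMAPI.
Variable beta : R.
Hypothesis beta_ge0 : 0 <= beta.

Lemma MVret_argmax d0 dt : MVret P r beta d0 dt ->
  forall i s, is_argmax P r beta (detp dt) i s (dt i s).
Proof.
elim=> [d sigma sweep_d | //] i s.
have := (sweep_d (sigma^-1 i)%g s).1; rewrite permKV.
rewrite (_ : hat d d sigma _ = d) //.
by apply: functional_extensionality_dep => j; rewrite /hat; case: ifP.
Qed.

Lemma ModOut_argmax d0 dt : ModOut P r beta d0 dt ->
  forall i s, is_argmax P r beta (detp dt) i s (dt i s).
Proof. by elim=> [d0' dt' /MVret_argmax | ]. Qed.

Lemma ModOut_eta d0 dt i (di : S -> A i) : ModOut P r beta d0 dt ->
  Dset P r beta dt i di -> Defs.eta P r (detp (dupd dt i di)) = Defs.eta P r (detp dt).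
Proof. by move=> out; elim: out i di => [d0' dt' _ eta_eq | //] i di /eta_eq. Qed.

Lemma Dset_EA dt i (di : S -> A i) :
  (forall j s, is_argmax P r beta (detp dt) j s (dt j s)) ->
  Dset P r beta dt i di -> forall s, EA P r beta (detp dt) i s (di s) = 0.
Proof.
move=> dt_max [_ di_max] s; rewrite -(EA_self beta dt i s).
by apply/eqP; rewrite eq_le dt_max di_max.
Qed.

Lemma J_Dmu d0 dt d : ModOut P r beta d0 dt -> Dmu P r beta dt d ->
  J P r beta (detp dt) = J P r beta (detp d).
Proof.
move=> out [i [di [Ddi ->]]]; apply/eqP; rewrite eq_sym -subr_eq0; apply/eqP.
rewrite J_diff; [|exact: detp_policy..].
rewrite Estat_dupd_Af (ModOut_eta out Ddi) subrr expr2 !mulr0 addr0.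
by rewrite big1 // => s _; rewrite (Dset_EA (ModOut_argmax out) Ddi) mulr0.
Qed.

Lemma not_Dmu_self dt : ~ Dmu P r beta dt dt.
Proof. by case=> i [di [[di_neq _] dt_eq]]; apply: di_neq; rewrite dt_eq dupd_eq. Qed.

Definition of_actions (g : {ffun S -> jact N A}) : dpol N A S := fun i s => g s i.

Lemma J_le_greedy mu (g : {ffun S -> jact N A}) : is_policy mu ->
  (forall s a, Af P r beta mu s a <= Af P r beta mu s (g s)) ->
  J P r beta mu <= J P r beta (detp (of_actions g)).
Proof.
move=> mu_pol g_max.
have g_pol : is_policy (detp (R := R) (of_actions g)) by apply: detp_policy.
rewrite -subr_ge0 J_diff //; apply: addr_ge0; last by rewrite mulr_ge0 // sqr_ge0.
apply: sumr_ge0 => s _; rewrite mulr_ge0 ?(stat_spec g_pol).1 //.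
rewrite sum_jprob_detp (_ : dact _ s = g s); last by apply/ffunP => i; rewrite ffunE.
rewrite -(sum_jprob_Af beta s mu_pol) -[leRHS]mul1r -(jprob_sum1 s mu_pol) mulr_suml.
by apply: ler_sum => a _; rewrite ler_wpM2l ?jprob_ge0 ?g_max.
Qed.

Lemma exists_greedy (a0 : jact N A) mu : is_policy mu ->
  exists g, J P r beta mu <= J P r beta (detp (of_actions g)).
Proof.
move=> mu_pol; exists [ffun s => [arg max_(a > a0) Af P r beta mu s a]%O].
apply: J_le_greedy => // s a; rewrite ffunE.
by case: arg_maxP => // b _; apply.
Qed.

Lemma optimal_outside_Dmu d0 dt : ModOut P r beta d0 dt ->
  exists dstar : dpol N A S, ~ Dmu P r beta dt dstar /\
    forall mu, is_policy mu -> J P r beta mu <= J P r beta (detp dstar).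
Proof.
move=> out; pose a0 := dact dt s0.
have [gm _ gm_max] :=
  @arg_maxP _ _ _ [ffun=> a0] xpredT (fun g => J P r beta (detp (of_actions g))) isT.
have J_le_gm mu : is_policy mu -> J P r beta mu <= J P r beta (detp (of_actions gm)).
  by move=> mu_pol; have [g Jg] := exists_greedy a0 mu_pol; apply: le_trans Jg (gm_max g isT).
have [Dgm|nDgm] := classic (Dmu P r beta dt (of_actions gm)); last by exists (of_actions gm).
exists dt; split; first exact: not_Dmu_self.
by move=> mu mu_pol; rewrite (J_Dmu out Dgm); apply: J_le_gm.
Qed.

Lemma EA_neg_of_not_Dmu dt i (di : S -> A i) :
  (forall j s, is_argmax P r beta (detp dt) j s (dt j s)) ->
  di <> dt i -> ~ Dmu P r beta dt (dupd dt i di) ->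
  exists s1, EA P r beta (detp dt) i s1 (di s1) < 0.
Proof.
move=> dt_max di_neq not_D; apply: NNPP => no_neg.
apply: not_D; exists i, di; split=> //; split=> // s b.
apply: le_trans (dt_max i s b) _; rewrite EA_self leNgt.
by apply/negP => EA_lt0; apply: no_neg; exists s.
Qed.

Lemma J_mixpol_diff dt i (di : S -> A i) (dl : R) : 0 <= dl <= 1 ->
  J P r beta (mixpol dt i di dl) - J P r beta (detp dt) =
  dl * \sum_s stat P (mixpol dt i di dl) s * EA P r beta (detp dt) i s (di s) +
  beta * (dl * \sum_s stat P (mixpol dt i di dl) s * EA P r 0 (detp dt) i s (di s)) ^+ 2.
Proof.
move=> dl01; have mix_pol := mixpol_policy dt di dl01.
by rewrite J_diff ?eta_diff ?Estat_mixpol_Af //; apply: detp_policy.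
Qed.

Lemma J_mixpol_lt dt i (di : S -> A i) s1 :
  (forall j s, is_argmax P r beta (detp dt) j s (dt j s)) ->
  EA P r beta (detp dt) i s1 (di s1) < 0 ->
  exists2 e : R, 0 < e & forall dl, 0 < dl <= e ->
    J P r beta (mixpol dt i di dl) < J P r beta (detp dt).
Proof.
move=> dt_max EA_lt0.
have [p p_gt0 p_le] := stat_mixpol_ge dt di s1.
pose G s := EA P r beta (detp dt) i s (di s).
pose H s := EA P r 0 (detp dt) i s (di s).
pose K := \sum_s `|H s|.
pose c := p * - G s1.
have c_gt0 : 0 < c by rewrite mulr_gt0 // oppr_gt0.
have K_ge0 : 0 <= K by apply: sumr_ge0 => s _; apply: normr_ge0.
have den_gt0 : 0 < beta * K ^+ 2 + 1 by rewrite ltr_wpDl ?mulr_ge0 ?sqr_ge0.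
exists (Num.min (2^-1) (c / (beta * K ^+ 2 + 1))).
  by rewrite lt_min invr_gt0 ltr0n divr_gt0.
move=> dl /andP[dl_gt0]; rewrite le_min => /andP[dl_half dl_c].
have dl01 : 0 <= dl <= 1 by apply/andP; split; lra.
have [pi_ge0 [pi1 _]] := stat_spec (mixpol_policy dt di dl01).
set pi := stat P (mixpol dt i di dl) in pi_ge0 pi1 p_le *.
have pi_le1 s : pi s <= 1.
  by rewrite -pi1 (bigD1 s) //= lerDl; apply: sumr_ge0 => s' _.
have first_order : \sum_s pi s * G s <= - c.
  rewrite (bigD1 s1) //= -[- c]addr0; apply: lerD.
    by rewrite /c mulrN opprK; apply: ler_wnM2r; [exact: ltW | apply: p_le; lra].
  apply: sumr_le0 => s _; apply: mulr_ge0_le0 => //.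
  by rewrite /G -(EA_self beta dt i s) dt_max.
have second_order : `|\sum_s pi s * H s| <= K.
  apply: le_trans (ler_norm_sum _ _ _) _; apply: ler_sum => s _.
  by rewrite normrM ger0_norm //; apply: ler_piMl.
rewrite -subr_lt0 J_mixpol_diff // -/pi.
set g := \sum_s pi s * G s in first_order *.
set h := \sum_s pi s * H s in second_order *.
have h2 : beta * (dl * h) ^+ 2 <= beta * (dl * K) ^+ 2.
  rewrite ler_wpM2l // !exprMn ler_wpM2l ?sqr_ge0 //.
  by move: second_order; rewrite ler_norml => /andP [? ?]; nra.
have dl_c' : dl * (beta * K ^+ 2 + 1) <= c by rewrite -ler_pdivlMr.
nra.
Qed.

Lemma strict_local_nash d0 dt : ModOut P r beta d0 dt ->
  exists dbar : R, 0 < dbar <= 1 /\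
    forall delta : R, 0 < delta <= dbar ->
    forall (i : 'I_N) (di : S -> A i),
      di <> dt i -> ~ Dmu P r beta dt (dupd dt i di) ->
      J P r beta (mixpol dt i di delta) < J P r beta (detp dt).
Proof.
move=> out; have dt_max := ModOut_argmax out.
pose Q (x : {i : 'I_N & {ffun S -> A i}}) (e : R) :=
  forall dl, 0 < dl <= e -> (tagged x : S -> A (tag x)) <> dt (tag x) ->
    ~ Dmu P r beta dt (dupd dt (tag x) (tagged x)) ->
    J P r beta (mixpol dt (tag x) (tagged x) dl) < J P r beta (detp dt).
have [|[i f]|e e01 Qe] := @exists_uniform_threshold _ _ Q.
- move=> x e e' Qe /andP[e'_gt0 e'_le] dl /andP[dl_gt0 dl_le]; apply: Qe.
  by rewrite dl_gt0 (le_trans dl_le e'_le).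
- have [[f_neq not_D]|] :=
    classic ((f : S -> A i) <> dt i /\ ~ Dmu P r beta dt (dupd dt i f)).
    have [s1 EA_lt0] := EA_neg_of_not_Dmu dt_max f_neq not_D.
    by have [e e_gt0 J_lt] := J_mixpol_lt dt_max EA_lt0; exists e => // dl /J_lt.
  by move=> cond; exists 1 => // dl _ f_neq not_D; case: cond.
exists e; split=> // dl dl_e i di; have := Qe (Tagged _ [ffun s => di s]) dl dl_e.
by rewrite /= (_ : fun_of_fin _ = di) //; apply: functional_extensionality => s; rewrite ffunE.
Qed.

End ModifiedMVMAPI.
End TeamGame.

Unset Implicit Arguments.

Theorem theorem4 (R : realType) (N : nat) (A : 'I_N -> finType) (S : finType)
  (P : S -> jact N A -> S -> R) (r : S -> jact N A -> R) (beta : R)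
  (P_ge0 : forall s a s', 0 <= P s a s')
  (P_sum1 : forall s a, \sum_(s' : S) P s a s' = 1)
  (beta_ge0 : 0 <= beta)
  (erg : forall mu : jpol R N A S, is_policy mu -> ergodic P mu)
  (d0 dt : dpol N A S)
  (out : ModOut P r beta d0 dt) :
  (* (1) *)
  ((forall d : dpol N A S, Dmu P r beta dt d ->
      J P r beta (detp dt) = J P r beta (detp d)) /\
   exists dstar : dpol N A S, ~ Dmu P r beta dt dstar /\
      forall mu : jpol R N A S, is_policy mu ->
        J P r beta mu <= J P r beta (detp dstar)) /\
  (* (2) *)
  (exists dbar : R, 0 < dbar <= 1 /\
     forall delta : R, 0 < delta <= dbar ->
     forall (i : 'I_N) (di : S -> A i),
       di <> dt i -> ~ Dmu P r beta dt (dupd dt i di) ->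
       J P r beta (mixpol dt i di delta) < J P r beta (detp dt)).
Proof.
have [s0 _|S_empty] := pickP (@predT S).
  split; [split|].
  - move=> d; exact: (J_Dmu P_ge0 P_sum1 s0 erg out).
  - exact: (optimal_outside_Dmu P_ge0 P_sum1 s0 erg beta_ge0 out).
  - exact: (strict_local_nash P_ge0 P_sum1 s0 erg beta_ge0 out).
have sum0 (F : S -> R) : \sum_s F s = 0 by rewrite big_pred0.
have J0 mu : J P r beta mu = 0 by rewrite /J /zeta /Defs.eta !sum0 mulr0 subr0.
split; [split|].
- by move=> d _; rewrite !J0.
- by exists dt; split=> [|mu _]; [apply: not_Dmu_self | rewrite !J0].
- exists 1; rewrite ltr01 lexx; split=> // delta _ i di di_neq.
  by case: di_neq; apply: functional_extensionality => s; have := S_empty s.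
Qed.
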